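(* Let $(r,\ell)$ be a $\mathcal C^1$ solution of system (D) on $[0,t_* )\times\mathbb R$. Then for all $t\in[0,t_* )$ and $\alpha,\beta\in\mathbb R$, $$c_1(t,\alpha)=\sqrt{\frac{k\big(r_0(\alpha)-\ell(t,x_1(t,\alpha))\big)}{k(2r_0(\alpha))}}\Big\{1+r_0'(\alpha)\sqrt{k(2r_0(\alpha))}\int_0^t f\big(r_0(\alpha)-\ell(\tau,x_1(\tau,\alpha))\big)\,d\tau\Big\},$$ $$c_2(t,\beta)=\sqrt{\frac{k\big(r(t,x_2(t,\beta))-\ell_0(\beta)\big)}{k(2r_0(\beta))}}\Big\{1+\ell_0'(\beta)\sqrt{k(2r_0(\beta))}\int_0^t f\big(r(\tau,x_2(\tau,\beta))-\ell_0(\beta)\big)\,d\tau\Big\}.$$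
   Context: Let $Q(\xi):=\sqrt{1+\xi^2}$, $L(u):=\tfrac12(u\sqrt{1+u^2}+\operatorname{arcsinh}u)$ (so $L'=Q$, $L$ an odd increasing bijection of $\mathbb R$), and $k(\eta):=Q(L^{-1}(-\eta/2))$, so $k$ is even, smooth, $k\ge k(0)=1$. Set $f(\eta):=k'(\eta)/\sqrt{k(\eta)}$. Given $w_0\in\mathcal C^2(\mathbb R)$ with $w_0'$ bounded and non-constant, let $r_0:=-L(w_0')$ and $\ell_0:=L(w_0')=-r_0$. System (D) is: $r_{,t}+k(r-\ell)r_{,x}=0$, $\ell_{,t}-k(r-\ell)\ell_{,x}=0$ on $[0,t_* )\times\mathbb R$, $r(0,\cdot)=r_0$, $\ell(0,\cdot)=\ell_0$, where $[0,t_* )$ is the maximal interval of existence of the $\mathcal C^1$ solution. Forward characteristics $x_1(t,\alpha)$ solve $\partial_t x_1=k\big((r-\ell)(t,x_1)\big)$, $x_1(0,\alpha)=\alpha$; backward characteristics $x_2(t,\beta)$ solve $\partial_tx_2=-k\big((r-\ell)(t,x_2)\big)$, $x_2(0,\beta)=\beta$. Along them $r(t,x_1(t,\alpha))=r_0(\alpha)$ and $\ell(t,x_2(t,\beta))=\ell_0(\beta)$. The infinitesimal compression ratios are $c_1(t,\alpha):=\partial x_1/\partial\alpha$ and $c_2(t,\beta):=\partial x_2/\partial\beta$. *)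

From Stdlib Require Import Reals Lra ClassicalEpsilon.
From Coquelicot Require Import Coquelicot.
Open Scope R_scope.

Definition Q (xi : R) : R := sqrt (1 + xi ^ 2).

Definition L (u : R) : R := (u * sqrt (1 + u ^ 2) + arcsinh u) / 2.

(* L^{-1}: the (unique, since L is an increasing bijection of R) y with L y = z *)
Definition Linv (z : R) : R := epsilon (inhabits 0) (fun y => L y = z).

Definition k (eta : R) : R := Q (Linv (- eta / 2)).

Definition fk (eta : R) : R := Derive k eta / sqrt (k eta).

Definition in_time (T : Rbar) (t : R) : Prop := 0 <= t /\ Rbar_lt t T.

Definition in_strip (T : Rbar) (p : R * R) : Prop := in_time T (fst p).

(* derivative of g at t relative to the set D (one-sided at endpoints) *)
Definition is_derive_within (D : R -> Prop) (g : R -> R) (t l : R) : Prop :=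
  filterlim (fun s => (g s - g t) / (s - t))
    (within (fun s => s <> t /\ D s) (locally t)) (locally l).

Definition continuous_within2 (S : R * R -> Prop) (v : R * R -> R) (p : R * R) : Prop :=
  filterlim v (within S (locally p)) (locally (v p)).

Definition C1_strip (T : Rbar) (u ut ux : R -> R -> R) : Prop :=
  forall t x, in_time T t ->
    is_derive_within (in_time T) (fun s => u s x) t (ut t x) /\
    is_derive (fun y => u t y) x (ux t x) /\
    continuous_within2 (in_strip T) (fun p => ut (fst p) (snd p)) (t, x) /\
    continuous_within2 (in_strip T) (fun p => ux (fst p) (snd p)) (t, x).

Definition C2 (w : R -> R) : Prop :=
  (forall x, ex_derive w x) /\ (forall x, ex_derive (Derive w) x) /\
  (forall x, continuous (Derive (Derive w)) x).

Definition r0_of (w0 : R -> R) (x : R) : R := - L (Derive w0 x).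
Definition l0_of (w0 : R -> R) (x : R) : R := L (Derive w0 x).

(* Along a forward characteristic r is constant, r = r0(a), so its speed k(r - l)
   depends on a only through x1 and l.  Differentiating the characteristic equation in a,
   c1 solves the variational equation c1' = (d/dx k(r - l)) c1, hence is an exponential
   of an integral; justifying this differentiation is a Gronwall argument on the gap
   between neighbouring characteristics.  Differentiating r(t, x1(t, a)) = r0(a) gives
   rx c1 = r0'(a), and along x1 one has (r0 - l)' = -2 k lx; together these make
   (c1 / sqrt (k (r0 - l)))' = r0'(a) f(r0 - l), which integrates to the formula since
   r0 - l = 2 r0 at t = 0.  The backward family is the same computation with r and l
   exchanged and the sign of the speed reversed. *)

From Stdlib Require Import Reals Lra ClassicalEpsilon Classical.
From Coquelicot Require Import Coquelicot.
Open Scope R_scope.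

Definition is_time_deriv (T : Rbar) (g : R -> R) (t l : R) : Prop :=
  forall eps, 0 < eps -> exists d, 0 < d /\ forall s, in_time T s -> s <> t ->
    Rabs (s - t) < d -> Rabs ((g s - g t) / (s - t) - l) < eps.

Definition time_continuous (T : Rbar) (g : R -> R) (t : R) : Prop :=
  forall eps, 0 < eps -> exists d, 0 < d /\ forall s, in_time T s ->
    Rabs (s - t) < d -> Rabs (g s - g t) < eps.

Definition strip_continuous (T : Rbar) (v : R -> R -> R) (t x : R) : Prop :=
  continuous_within2 (in_strip T) (fun p => v (fst p) (snd p)) (t, x).

Lemma is_time_deriv_within (T : Rbar) (g : R -> R) (t l : R) :
  is_derive_within (in_time T) g t l -> is_time_deriv T g t l.
Proof.
  intros H eps He.
  destruct (H (ball l (mkposreal eps He)) (locally_ball _ _)) as [[d Hd] Hd'].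
  exists d; split; [exact Hd|].
  intros s Hs Hst Hsd. apply (Hd' s); [exact Hsd | split; assumption].
Qed.

Lemma strip_continuous_epsilon (T : Rbar) (v : R -> R -> R) (t x : R) :
  strip_continuous T v t x -> forall eps, 0 < eps -> exists d, 0 < d /\
    forall s y, in_time T s -> Rabs (s - t) < d -> Rabs (y - x) < d ->
    Rabs (v s y - v t x) < eps.
Proof.
  intros H eps He.
  destruct (H (ball (v t x) (mkposreal eps He)) (locally_ball _ _)) as [[d Hd] Hd'].
  exists d; split; [exact Hd|].
  intros s y Hs H1 H2. apply (Hd' (s, y)); [split; assumption | exact Hs].
Qed.

Lemma epsilon_strip_continuous (T : Rbar) (v : R -> R -> R) (t x : R) :
  (forall eps, 0 < eps -> exists d, 0 < d /\
     forall s y, in_time T s -> Rabs (s - t) < d -> Rabs (y - x) < d ->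
     Rabs (v s y - v t x) < eps) ->
  strip_continuous T v t x.
Proof.
  intros H P [[e He] HP].
  destruct (H e He) as [d [Hd Hd']].
  exists (mkposreal d Hd). intros [s y] [H1 H2] Hs. apply HP, (Hd' s y Hs H1 H2).
Qed.

Lemma continuous_epsilon (f : R -> R) (x : R) : continuous f x ->
  forall eps, 0 < eps -> exists d, 0 < d /\
    forall y, Rabs (y - x) < d -> Rabs (f y - f x) < eps.
Proof.
  intros H eps He.
  destruct (H (ball (f x) (mkposreal eps He)) (locally_ball _ _)) as [[d Hd] Hd'].
  exists d; split; [exact Hd|]. intros y Hy. apply (Hd' y). exact Hy.
Qed.

Lemma epsilon_continuous (f : R -> R) (x : R) :
  (forall eps, 0 < eps -> exists d, 0 < d /\
     forall y, Rabs (y - x) < d -> Rabs (f y - f x) < eps) ->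
  continuous f x.
Proof.
  intros H P [[e He] HP].
  destruct (H e He) as [d [Hd Hd']].
  exists (mkposreal d Hd). intros y Hy. apply HP. apply (Hd' y). exact Hy.
Qed.

Lemma Rbar_lt_nbhd (T : Rbar) (t : R) : Rbar_lt t T ->
  exists d, 0 < d /\ forall s, Rabs (s - t) < d -> Rbar_lt s T.
Proof.
  destruct T as [b| |]; simpl; intros H.
  - exists (b - t); split; [lra|]. intros s Hs. apply Rabs_def2 in Hs. lra.
  - exists 1; split; [lra | auto].
  - contradiction.
Qed.

Lemma in_time_le (T : Rbar) (s t : R) : in_time T t -> 0 <= s <= t -> in_time T s.
Proof.
  intros [_ Ht] Hs. split; [lra|].
  apply (Rbar_le_lt_trans _ t); [simpl; lra | exact Ht].
Qed.

Lemma is_derive_of_time_deriv (T : Rbar) (g : R -> R) (t l : R) :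
  in_time T t -> 0 < t -> is_time_deriv T g t l -> is_derive g t l.
Proof.
  intros [_ Ht] Hpos H. apply is_derive_Reals. intros eps He.
  destruct (H eps He) as [d [Hd Hd']].
  destruct (Rbar_lt_nbhd T t Ht) as [d2 [Hd2 Hd2']].
  assert (Hm : 0 < Rmin d (Rmin d2 t)) by (repeat apply Rmin_pos; lra).
  exists (mkposreal _ Hm). intros h Hh Hhd. simpl in Hhd.
  assert (H1 := Rmin_l d (Rmin d2 t)). assert (H2 := Rmin_r d (Rmin d2 t)).
  assert (H3 := Rmin_l d2 t). assert (H4 := Rmin_r d2 t).
  assert (E : t + h - t = h) by ring.
  specialize (Hd' (t + h)). rewrite E in Hd'. apply Hd'; [split | | lra].
  - apply Rabs_def2 in Hhd. lra.
  - apply Hd2'. rewrite E. lra.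
  - intro E2. apply Hh. lra.
Qed.

Lemma time_continuous_of_deriv (T : Rbar) (g : R -> R) (t l : R) :
  is_time_deriv T g t l -> time_continuous T g t.
Proof.
  intros H eps He.
  destruct (H 1 Rlt_0_1) as [d [Hd Hd']].
  assert (Hl : 0 < Rabs l + 1) by (generalize (Rabs_pos l); lra).
  set (m := Rmin d (eps / (Rabs l + 1))).
  assert (Hm : 0 < m) by (apply Rmin_pos; [lra | apply Rdiv_lt_0_compat; lra]).
  exists m; split; [exact Hm|].
  intros s Hs Hsd.
  destruct (Req_dec s t) as [E|E]. { subst. rewrite Rminus_eq_0, Rabs_R0. exact He. }
  assert (Hsd1 : Rabs (s - t) < d) by (eapply Rlt_le_trans; [exact Hsd | apply Rmin_l]).
  assert (Hsd2 : Rabs (s - t) < eps / (Rabs l + 1))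
    by (eapply Rlt_le_trans; [exact Hsd | apply Rmin_r]).
  specialize (Hd' s Hs E Hsd1).
  assert (Hq : Rabs ((g s - g t) / (s - t)) < Rabs l + 1).
  { replace ((g s - g t) / (s - t)) with (((g s - g t) / (s - t) - l) + l) by ring.
    eapply Rle_lt_trans; [apply Rabs_triang | lra]. }
  replace (g s - g t) with (((g s - g t) / (s - t)) * (s - t)) by (field; lra).
  rewrite Rabs_mult.
  apply Rle_lt_trans with ((Rabs l + 1) * Rabs (s - t)).
  - apply Rmult_le_compat_r; [apply Rabs_pos | lra].
  - apply Rlt_le_trans with ((Rabs l + 1) * (eps / (Rabs l + 1))).
    + apply Rmult_lt_compat_l; lra.
    + right; field; lra.
Qed.

Lemma is_derive_congr (f g : R -> R) (x l l' : R) :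
  is_derive g x l' -> (forall t, g t = f t) -> l' = l -> is_derive f x l.
Proof. intros H E E'. subst l. eapply is_derive_ext; [exact E | exact H]. Qed.

Lemma continuous_of_is_derive (f : R -> R) (x l : R) : is_derive f x l -> continuous f x.
Proof. intros H. apply (ex_derive_continuous f x). exists l; exact H. Qed.

Lemma continuity_pt_of_is_derive (f : R -> R) (x l : R) :
  is_derive f x l -> continuity_pt f x.
Proof. intros H. apply continuity_pt_filterlim. eapply continuous_of_is_derive, H. Qed.

Lemma Q_ge1 (y : R) : 1 <= Q y.
Proof.
  unfold Q. rewrite <- sqrt_1 at 1. apply sqrt_le_1_alt. generalize (pow2_ge_0 y); lra.
Qed.

Lemma Q_sqr (y : R) : Q y * Q y = 1 + y ^ 2.
Proof. unfold Q. apply sqrt_sqrt. generalize (pow2_ge_0 y); lra. Qed.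

Lemma is_derive_Q (y : R) : is_derive Q y (y / Q y).
Proof.
  unfold Q. assert (H1 : 0 < 1 + y ^ 2) by (generalize (pow2_ge_0 y); lra).
  assert (Hs : 0 < sqrt (1 + y ^ 2)) by (apply sqrt_lt_R0; exact H1).
  auto_derive; [nra |]. replace (y * (y * 1)) with (y ^ 2) by ring. field. lra.
Qed.

Lemma is_derive_L (y : R) : is_derive L y (Q y).
Proof.
  assert (HQ := Q_ge1 y). assert (HQ2 := Q_sqr y).
  assert (A : is_derive (fun u => u * Q u) y (Q y + y * (y / Q y))).
  { eapply is_derive_congr.
    - apply (is_derive_mult (fun u => u) Q); [apply is_derive_id | apply is_derive_Q |].
      intros; apply Rmult_comm.
    - reflexivity.
    - unfold plus, mult, one; simpl. ring. }
  assert (B : is_derive arcsinh y (/ Q y)).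
  { eapply is_derive_congr; [apply is_derive_Reals, derivable_pt_lim_arcsinh | reflexivity |].
    unfold Q. f_equal. f_equal. ring. }
  eapply is_derive_congr.
  - apply (is_derive_scal (fun u => u * Q u + arcsinh u) _ (/ 2)).
    apply (is_derive_plus _ _ _ _ _ A B).
  - intros u. unfold L, Q, plus, scal; simpl; unfold mult; simpl. field.
  - unfold plus, scal; simpl; unfold mult; simpl.
    transitivity ((Q y * Q y + y ^ 2 + 1) / (2 * Q y)); [field; lra |].
    rewrite HQ2. transitivity ((Q y * Q y + Q y * Q y) / (2 * Q y)).
    + rewrite HQ2. f_equal. ring.
    + field. lra.
Qed.

Lemma L_expanding (y y' : R) : y <= y' -> y' - y <= L y' - L y.
Proof.
  intros H. destruct (Req_dec y y') as [E|E]. { subst; lra. }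
  destruct (MVT_gen L y y' Q) as [c [_ Hm]].
  - intros x _. apply is_derive_L.
  - intros x _. eapply continuity_pt_of_is_derive, is_derive_L.
  - rewrite Hm. generalize (Q_ge1 c). nra.
Qed.

Lemma Rabs_sub_le_L (y y' : R) : Rabs (y - y') <= Rabs (L y - L y').
Proof.
  destruct (Rle_dec y y') as [H|H].
  - assert (K := L_expanding y y' H). rewrite !Rabs_left1 by lra. lra.
  - assert (K := L_expanding y' y ltac:(lra)). rewrite !Rabs_right by lra. lra.
Qed.

Lemma L_surjective (z : R) : exists y, L y = z.
Proof.
  set (b := 2 * Rabs z + 2).
  assert (Hz := Rabs_pos z). assert (Hz1 := Rle_abs z). assert (Hz2 := Rle_abs (- z)).
  rewrite Rabs_Ropp in Hz2.
  assert (L0 : L 0 = 0) by (unfold L; rewrite arcsinh_0; lra).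
  assert (H1 : b <= L b) by (generalize (L_expanding 0 b); unfold b in *; lra).
  assert (H2 : L (- b) <= - b) by (generalize (L_expanding (- b) 0); unfold b in *; lra).
  destruct (IVT_gen L (- b) b z) as [y [_ Hy]].
  - intros x. eapply continuity_pt_of_is_derive, is_derive_L.
  - split.
    + eapply Rle_trans; [apply Rmin_l | unfold b in *; lra].
    + eapply Rle_trans; [| apply Rmax_r]. unfold b in *; lra.
  - exists y; exact Hy.
Qed.

Lemma L_Linv (z : R) : L (Linv z) = z.
Proof.
  unfold Linv. apply (epsilon_spec (inhabits 0) (fun y => L y = z)), L_surjective.
Qed.

Lemma Linv_Lipschitz (z z' : R) : Rabs (Linv z - Linv z') <= Rabs (z - z').
Proof. rewrite <- (L_Linv z) at 2. rewrite <- (L_Linv z') at 2. apply Rabs_sub_le_L. Qed.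

(* The difference quotient of Linv is the inverse of that of L, and the latter is at least 1. *)
Lemma is_derive_Linv (z : R) : is_derive Linv z (/ Q (Linv z)).
Proof.
  apply is_derive_Reals. intros eps He.
  set (y := Linv z).
  destruct (proj1 (is_derive_Reals L y (Q y)) (is_derive_L y) eps He) as [d Hd].
  exists d. intros h Hh Hhd.
  set (yh := Linv (z + h)).
  assert (Eh : L yh - L y = h) by (unfold yh, y; rewrite !L_Linv; ring).
  assert (Hne : yh - y <> 0).
  { intro E. apply Hh. rewrite <- Eh. replace yh with y by lra. ring. }
  assert (Hk : Rabs (yh - y) < d).
  { eapply Rle_lt_trans; [apply Linv_Lipschitz |]. replace (z + h - z) with h by ring. exact Hhd. }
  specialize (Hd (yh - y) Hne Hk).
  replace (y + (yh - y)) with yh in Hd by ring. rewrite Eh in Hd.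
  set (q := h / (yh - y)) in *.
  assert (Hq : 1 <= q).
  { unfold q. rewrite <- Eh.
    destruct (Rle_dec y yh) as [H|H].
    - assert (K := L_expanding y yh H).
      apply (Rmult_le_reg_r (yh - y)); [lra |]. field_simplify; lra.
    - assert (K := L_expanding yh y ltac:(lra)).
      apply (Rmult_le_reg_r (y - yh)); [lra |].
      replace ((L yh - L y) / (yh - y) * (y - yh)) with (L y - L yh) by (field; lra). lra. }
  assert (HQ := Q_ge1 y).
  fold yh. replace ((yh - y) / h) with (/ q) by (unfold q; field; split; assumption).
  replace (/ q - / Q y) with ((q - Q y) * / (- (q * Q y))) by (field; lra).
  rewrite Rabs_mult, Rabs_inv. rewrite Rabs_Ropp, (Rabs_right (q * Q y)) by nra.
  apply Rle_lt_trans with (Rabs (q - Q y) * 1); [| lra].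
  apply Rmult_le_compat_l; [apply Rabs_pos |].
  rewrite <- Rinv_1. apply Rinv_le_contravar; nra.
Qed.

Definition dk (eta : R) : R :=
  - Linv (- eta / 2) / (2 * (1 + Linv (- eta / 2) ^ 2)).

Lemma k_ge1 (eta : R) : 1 <= k eta.
Proof. apply Q_ge1. Qed.

Lemma sqrt_k_pos (eta : R) : 0 < sqrt (k eta).
Proof. apply sqrt_lt_R0. generalize (k_ge1 eta); lra. Qed.

Lemma is_derive_k (eta : R) : is_derive k eta (dk eta).
Proof.
  assert (A : is_derive (fun e => - e / 2) eta (- / 2)) by (auto_derive; [auto | field]).
  assert (B := is_derive_comp Linv (fun e => - e / 2) eta _ _ (is_derive_Linv _) A).
  eapply is_derive_congr; [apply (is_derive_comp Q _ eta _ _ (is_derive_Q _) B) | reflexivity |].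
  unfold dk, scal; simpl; unfold mult; simpl.
  set (y := Linv (- eta / 2)). assert (HQ := Q_ge1 y).
  replace (1 + y * (y * 1)) with (Q y * Q y) by (rewrite Q_sqr; ring). field. lra.
Qed.

Lemma Derive_k (eta : R) : Derive k eta = dk eta.
Proof. apply is_derive_unique, is_derive_k. Qed.

Lemma continuous_k (eta : R) : continuous k eta.
Proof. eapply continuous_of_is_derive, is_derive_k. Qed.

Lemma continuous_dk (eta : R) : continuous dk eta.
Proof.
  apply (continuous_comp (fun e => Linv (- e / 2)) (fun y => - y / (2 * (1 + y ^ 2)))).
  - apply (continuous_comp (fun e => - e / 2) Linv).
    + apply (continuous_of_is_derive _ _ (- / 2)). auto_derive; [auto | field].
    + eapply continuous_of_is_derive, is_derive_Linv.
  - apply (ex_derive_continuous (fun y => - y / (2 * (1 + y ^ 2)))).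
    auto_derive. generalize (pow2_ge_0 (Linv (- eta / 2))); nra.
Qed.

Lemma continuous_fk (eta : R) : continuous fk eta.
Proof.
  apply (continuous_ext (fun z => dk z * / sqrt (k z))).
  { intros y. unfold fk. rewrite Derive_k. reflexivity. }
  apply (continuous_mult dk (fun z => / sqrt (k z))); [apply continuous_dk |].
  apply (continuous_Rinv_comp (fun z => sqrt (k z))).
  - apply (continuous_comp k sqrt); [apply continuous_k | apply continuous_sqrt].
  - apply Rgt_not_eq, sqrt_k_pos.
Qed.

Lemma Rabs_Rmax0_le (s c : R) : Rabs (Rmax 0 s - Rmax 0 c) <= Rabs (s - c).
Proof.
  unfold Rmax. destruct (Rle_dec 0 s); destruct (Rle_dec 0 c);
  unfold Rabs; repeat destruct Rcase_abs; lra.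
Qed.

Lemma continuous_Rmax0 (x : R) : continuous (fun s => Rmax 0 s) x.
Proof.
  apply epsilon_continuous. intros eps He. exists eps; split; [exact He|].
  intros y Hy. eapply Rle_lt_trans; [apply Rabs_Rmax0_le | exact Hy].
Qed.

(* [Rmax 0] extends a function on [0, T) to the left of 0; this turns one-sided
   statements at 0 into ordinary continuity and derivability. *)
Lemma continuous_clamp (T : Rbar) (p : R -> R) (c : R) : Rbar_lt 0 T -> Rbar_lt c T ->
  time_continuous T p (Rmax 0 c) -> continuous (fun s => p (Rmax 0 s)) c.
Proof.
  intros HT Hc Hp.
  assert (Hc' : in_time T (Rmax 0 c)).
  { split; [apply Rmax_l |]. unfold Rmax; destruct (Rle_dec 0 c); assumption. }
  destruct (Rbar_lt_nbhd T _ (proj2 Hc')) as [d0 [Hd0 Hd0']].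
  apply epsilon_continuous. intros eps He.
  destruct (Hp eps He) as [d [Hd Hd']].
  exists (Rmin d d0); split; [apply Rmin_pos; assumption |].
  intros y Hy.
  assert (Hl := Rabs_Rmax0_le y c).
  assert (H1 := Rmin_l d d0). assert (H2 := Rmin_r d d0).
  apply Hd'; [split; [apply Rmax_l | apply Hd0'] |]; lra.
Qed.

Lemma nonincreasing_from_0 (g g' : R -> R) (t1 : R) : 0 < t1 ->
  (forall s, 0 < s <= t1 -> is_derive g s (g' s)) ->
  (forall s, 0 < s <= t1 -> g' s <= 0) ->
  continuous (fun s => g (Rmax 0 s)) 0 -> g t1 <= g 0.
Proof.
  intros Ht Hd Hneg Hc.
  destruct (Rle_dec (g t1) (g 0)) as [H|H]; [exact H | exfalso].
  destruct (continuous_epsilon _ _ Hc (g t1 - g 0) ltac:(lra)) as [d [Hd0 Hd0']].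
  set (s := Rmin (d / 2) (t1 / 2)).
  assert (Hs1 : 0 < s) by (apply Rmin_pos; lra).
  assert (Hs2 := Rmin_l (d / 2) (t1 / 2)). assert (Hs3 := Rmin_r (d / 2) (t1 / 2)).
  fold s in Hs2, Hs3.
  destruct (MVT_gen g s t1 g') as [c [Hc' Hm]].
  - intros x Hx. rewrite Rmin_left, Rmax_right in Hx by lra. apply Hd; lra.
  - intros x Hx. rewrite Rmin_left, Rmax_right in Hx by lra.
    eapply continuity_pt_of_is_derive, Hd; lra.
  - rewrite Rmin_left, Rmax_right in Hc' by lra.
    assert (K := Hneg c ltac:(lra)).
    assert (K2 := Hd0' s ltac:(rewrite Rminus_0_r, Rabs_right; lra)).
    rewrite Rmax_right, Rmax_left in K2 by lra. apply Rabs_def2 in K2.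
    assert (g' c * (t1 - s) <= 0) by (apply Rmult_le_0_r; lra). lra.
Qed.

Lemma constant_from_0 (g : R -> R) (t : R) : 0 <= t ->
  (forall s, 0 < s <= t -> is_derive g s 0) ->
  continuous (fun s => g (Rmax 0 s)) 0 -> g t = g 0.
Proof.
  intros Ht Hd Hc. destruct (Req_dec t 0) as [E|E]; [subst; reflexivity |].
  assert (A := nonincreasing_from_0 g (fun _ => 0) t ltac:(lra) Hd ltac:(intros; lra) Hc).
  assert (B : - g t <= - g 0).
  { apply (nonincreasing_from_0 (fun s => - g s) (fun _ => 0) t); [lra | | intros; lra |].
    - intros s Hs. eapply is_derive_congr; [apply is_derive_opp, Hd, Hs | reflexivity |].
      unfold opp; simpl; ring.
    - apply (continuous_opp (fun s => g (Rmax 0 s))), Hc. }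
  lra.
Qed.

Lemma exp_le_exp_of_le (x y : R) : x <= y -> exp x <= exp y.
Proof.
  intros H. destruct (Req_dec x y) as [E|E]; [subst; lra |]. left; apply exp_increasing; lra.
Qed.

(* Multiplying by [exp (- K s)] makes the Gronwall quantity nonincreasing. *)
Lemma gronwall (phi phi' : R -> R) (K t1 : R) : 0 <= t1 ->
  (forall s, 0 < s <= t1 -> is_derive phi s (phi' s)) ->
  (forall s, 0 < s <= t1 -> phi' s <= K * phi s) ->
  continuous (fun s => phi (Rmax 0 s)) 0 ->
  phi t1 <= phi 0 * exp (K * t1).
Proof.
  intros Ht Hd Hle Hc.
  destruct (Req_dec t1 0) as [E|E]. { subst. rewrite Rmult_0_r, exp_0. lra. }
  set (psi := fun s => phi s * exp (- K * s)).
  assert (M : psi t1 <= psi 0).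
  { apply (nonincreasing_from_0 psi
             (fun s => phi' s * exp (- K * s) + phi s * (- K * exp (- K * s)))); [lra | | |].
    - intros s Hs. eapply is_derive_congr.
      + apply (is_derive_mult phi (fun s => exp (- K * s)) s (phi' s) (- K * exp (- K * s)));
          [apply Hd, Hs | | ].
        * auto_derive; [auto | ring].
        * intros; apply Rmult_comm.
      + reflexivity.
      + unfold plus, mult; simpl; ring.
    - intros s Hs. assert (K1 := Hle s Hs). assert (K2 := exp_pos (- K * s)). nra.
    - apply (continuous_mult (fun s => phi (Rmax 0 s)) (fun s => exp (- K * Rmax 0 s)));
        [exact Hc |].
      apply (continuous_comp (fun s => Rmax 0 s) (fun y => exp (- K * y)));
        [apply continuous_Rmax0 |].
      apply (ex_derive_continuous (fun y => exp (- K * y))). auto_derive. auto. }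
  unfold psi in M. rewrite Rmult_0_r, exp_0, Rmult_1_r in M.
  assert (E2 : exp (- K * t1) * exp (K * t1) = 1)
    by (rewrite <- exp_plus, <- exp_0; f_equal; ring).
  assert (Hp := exp_pos (K * t1)).
  replace (phi t1) with (phi t1 * exp (- K * t1) * exp (K * t1)) by (rewrite Rmult_assoc, E2; ring).
  apply Rmult_le_compat_r; lra.
Qed.

Lemma time_continuous_bounded (T : Rbar) (p : R -> R) (t0 : R) : Rbar_lt 0 T ->
  (forall s, in_time T s -> time_continuous T p s) ->
  in_time T t0 -> exists M, forall s, 0 <= s <= t0 -> Rabs (p s) <= M.
Proof.
  intros HT Hp Ht0.
  destruct (continuity_ab_maj (fun s => Rabs (p (Rmax 0 s))) 0 t0 (proj1 Ht0))
    as [Mx [HM _]].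
  - intros c Hc. apply continuity_pt_filterlim.
    apply (continuous_comp (fun s => p (Rmax 0 s)) Rabs); [| apply continuous_Rabs].
    assert (Hi : in_time T c) by (apply (in_time_le T c t0); [exact Ht0 | lra]).
    apply (continuous_clamp T); [exact HT | apply Hi |].
    rewrite Rmax_right by lra. apply Hp, Hi.
  - exists (Rabs (p (Rmax 0 Mx))). intros s Hs. specialize (HM s Hs). simpl in HM.
    rewrite Rmax_right in HM by lra. exact HM.
Qed.

Lemma continuous_clamp_on (T : Rbar) (p : R -> R) (c : R) : Rbar_lt 0 T -> Rbar_lt c T ->
  (forall s, in_time T s -> time_continuous T p s) ->
  continuous (fun s => p (Rmax 0 s)) c.
Proof.
  intros HT Hc Hp. apply (continuous_clamp T); [exact HT | exact Hc |].
  apply Hp. split; [apply Rmax_l |]. unfold Rmax; destruct (Rle_dec 0 c); assumption.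
Qed.

Lemma is_derive_RInt_clamp (T : Rbar) (p : R -> R) (t : R) : Rbar_lt 0 T -> Rbar_lt t T ->
  (forall s, in_time T s -> time_continuous T p s) ->
  is_derive (fun b => RInt (fun s => p (Rmax 0 s)) 0 b) t (p (Rmax 0 t)).
Proof.
  intros HT Ht Hp.
  apply (is_derive_RInt (fun s => p (Rmax 0 s)) (fun b => RInt (fun s => p (Rmax 0 s)) 0 b) 0);
    [| apply (continuous_clamp_on T); assumption].
  destruct (Rbar_lt_nbhd T t Ht) as [d [Hd Hd']].
  exists (mkposreal d Hd). intros b Hb.
  apply (RInt_correct (V := R_CompleteNormedModule)), ex_RInt_continuous.
  intros z Hz. apply (continuous_clamp_on T); [exact HT | | exact Hp].
  assert (Hbt : Rbar_lt b T) by (apply Hd'; exact Hb).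
  apply (Rbar_le_lt_trans _ (Rmax 0 b)); [simpl; apply Hz |].
  unfold Rmax; destruct Rle_dec; assumption.
Qed.

Lemma uniform_continuity_local (T : Rbar) (G : R -> R -> R) (X : R -> R) (t eps : R) :
  strip_continuous T G t (X t) -> time_continuous T X t -> 0 < eps ->
  exists dl, 0 < dl /\ forall s y, in_time T s -> Rabs (s - t) < dl ->
    Rabs (y - X s) < dl -> Rabs (G s y - G s (X s)) < eps.
Proof.
  intros HG HX He.
  destruct (strip_continuous_epsilon T G t (X t) HG (eps / 2) ltac:(lra)) as [dG [HdG HdG']].
  destruct (HX (dG / 2) ltac:(lra)) as [dX [HdX HdX']].
  exists (Rmin (dG / 2) dX); split; [apply Rmin_pos; lra |].
  intros s y Hs Hst Hy.
  assert (H1 := Rmin_l (dG / 2) dX). assert (H2 := Rmin_r (dG / 2) dX).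
  assert (K1 : Rabs (X s - X t) < dG / 2) by (apply HdX'; [exact Hs | lra]).
  assert (K3 : Rabs (y - X t) < dG).
  { replace (y - X t) with ((y - X s) + (X s - X t)) by ring.
    eapply Rle_lt_trans; [apply Rabs_triang | lra]. }
  assert (K4 := HdG' s y Hs ltac:(lra) K3).
  assert (K5 := HdG' s (X s) Hs ltac:(lra) ltac:(lra)).
  replace (G s y - G s (X s)) with ((G s y - G t (X t)) + - (G s (X s) - G t (X t))) by ring.
  eapply Rle_lt_trans; [apply Rabs_triang |]. rewrite Rabs_Ropp. lra.
Qed.

(* Heine--Borel on [0, t0], through Coquelicot's [compactness_value_1d]. *)
Lemma uniform_continuity_along_curve (T : Rbar) (G : R -> R -> R) (X : R -> R) (t0 eps : R) :
  (forall s, in_time T s -> strip_continuous T G s (X s)) ->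
  (forall s, in_time T s -> time_continuous T X s) ->
  in_time T t0 -> 0 < eps ->
  exists d, 0 < d /\ forall s y, 0 <= s <= t0 ->
    Rabs (y - X s) < d -> Rabs (G s y - G s (X s)) < eps.
Proof.
  intros HG HX Ht0 He.
  set (P := fun t (dl : posreal) => forall s y, in_time T s -> Rabs (s - t) < dl ->
    Rabs (y - X s) < dl -> Rabs (G s y - G s (X s)) < eps).
  assert (Ex : forall t, exists dl : posreal, in_time T t -> P t dl).
  { intros t. destruct (classic (in_time T t)) as [Ht|Ht].
    - destruct (uniform_continuity_local T G X t eps (HG t Ht) (HX t Ht) He) as [dl [Hdl Hdl']].
      exists (mkposreal dl Hdl). intros _. exact Hdl'.
    - exists (mkposreal 1 Rlt_0_1). intros H; contradiction. }
  set (delta := fun t => proj1_sig (constructive_indefinite_description _ (Ex t))).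
  assert (Hdelta : forall t, in_time T t -> P t (delta t))
    by (intros t; exact (proj2_sig (constructive_indefinite_description _ (Ex t)))).
  destruct (compactness_value_1d 0 t0 delta) as [d Hd].
  exists d; split; [apply cond_pos |].
  intros s y Hs Hy.
  apply Rnot_le_lt. intros Hn. apply (Hd s Hs). intros [t [Ht [Hst Hdt]]].
  apply (Rlt_not_le _ _ (Hdelta t (in_time_le T t t0 Ht0 Ht) s y
    (in_time_le T s t0 Ht0 Hs) Hst ltac:(lra)) Hn).
Qed.

Lemma le_of_left_limit (T : Rbar) (D : R -> R) (tau b : R) : in_time T tau -> 0 < tau ->
  time_continuous T D tau -> (forall s, 0 <= s < tau -> Rabs (D s) <= b) -> Rabs (D tau) <= b.
Proof.
  intros Hti Hpos Hc Hb. apply Rnot_lt_le. intros Hgt.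
  destruct (Hc (Rabs (D tau) - b) ltac:(lra)) as [e [He He']].
  set (s := Rmax 0 (tau - e / 2)).
  assert (Hs1 : 0 <= s) by apply Rmax_l.
  assert (Hs2 : s < tau) by (unfold s, Rmax; destruct Rle_dec; lra).
  assert (Hs3 : tau - e / 2 <= s) by apply Rmax_r.
  assert (K := He' s (in_time_le T s tau Hti ltac:(lra)) ltac:(rewrite Rabs_left; lra)).
  assert (K2 := Hb s ltac:(lra)).
  assert (K3 := Rabs_triang_inv (D tau) (D s)).
  rewrite <- Rabs_Ropp in K. replace (- (D s - D tau)) with (D tau - D s) in K by ring. lra.
Qed.

Lemma continuity_bootstrap (T : Rbar) (D : R -> R) (t0 d : R) : in_time T t0 -> 0 < d ->
  Rabs (D 0) < d ->
  (forall s, in_time T s -> time_continuous T D s) ->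
  (forall t, 0 <= t <= t0 -> (forall s, 0 <= s <= t -> Rabs (D s) < d) -> Rabs (D t) <= d / 2) ->
  forall t, 0 <= t <= t0 -> Rabs (D t) < d.
Proof.
  intros Ht0 Hd HD0 Hc Hstep. assert (Ht00 := proj1 Ht0).
  set (A := fun s => 0 <= s <= t0 /\ forall s', 0 <= s' <= s -> Rabs (D s') < d).
  assert (HA0 : A 0) by (split; [lra | intros s' Hs'; replace s' with 0 by lra; exact HD0]).
  destruct (completeness A ltac:(exists t0; intros s [Hs _]; lra) (ex_intro _ 0 HA0))
    as [tau [Hub Hlub]].
  assert (Htau0 : 0 <= tau) by (apply Hub; exact HA0).
  assert (Htau1 : tau <= t0) by (apply Hlub; intros s [Hs _]; lra).
  assert (Hti := in_time_le T tau t0 Ht0 ltac:(lra)).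
  assert (Hbelow : forall s, 0 <= s < tau -> Rabs (D s) <= d / 2).
  { intros s Hs. apply Hstep; [lra |]. intros s' Hs'. apply NNPP. intros Hn.
    assert (tau <= s'); [| lra].
    apply Hlub. intros a' [Ha Ha']. apply Rnot_lt_le. intros Has. apply Hn, Ha'. lra. }
  assert (Htau : Rabs (D tau) <= d / 2).
  { destruct (Req_dec tau 0) as [E|E].
    - rewrite E. apply Hstep; [lra |]. intros s' Hs'. replace s' with 0 by lra. exact HD0.
    - apply (le_of_left_limit T); [exact Hti | lra | apply Hc, Hti | exact Hbelow]. }
  assert (Hupto : forall s, 0 <= s <= tau -> Rabs (D s) < d).
  { intros s Hs. destruct (Req_dec s tau) as [E|E]; [subst; lra |].
    assert (K := Hbelow s ltac:(lra)). lra. }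
  assert (Htau_t0 : tau = t0).
  { destruct (Req_dec tau t0) as [E|E]; [exact E | exfalso].
    destruct (Hc tau Hti (d / 2) ltac:(lra)) as [e [He He']].
    set (s := Rmin (tau + e / 2) t0).
    assert (Hs1 : tau < s) by (unfold s, Rmin; destruct Rle_dec; lra).
    assert (Hs2 : s <= t0) by apply Rmin_r.
    assert (Hs3 : s <= tau + e / 2) by apply Rmin_l.
    assert (s <= tau); [| lra].
    apply Hub. split; [lra |]. intros s' Hs'.
    destruct (Rle_dec s' tau) as [H|H]; [apply Hupto; lra |].
    assert (K := He' s' (in_time_le T s' t0 Ht0 ltac:(lra)) ltac:(rewrite Rabs_right; lra)).
    assert (K3 := Rabs_triang_inv (D s') (D tau)). lra. }
  intros t Ht. apply Hupto. lra.
Qed.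

Lemma filterlim_Rminus (u v : R) :
  filterlim (fun z : R * R => fst z - snd z)
    (filter_prod (locally u) (locally v)) (locally (u - v)).
Proof.
  apply (filterlim_comp_2 (F := filter_prod (locally u) (locally v)) (G := locally u)
    (H := locally (opp v)) fst (fun z => opp (snd z)) (@plus R_NormedModule)).
  - apply filterlim_fst.
  - eapply filterlim_comp; [apply filterlim_snd | apply (filterlim_opp (V := R_NormedModule))].
  - apply (filterlim_plus (V := R_NormedModule)).
Qed.

Lemma strip_continuous_minus (T : Rbar) (a b : R -> R -> R) (t x : R) :
  strip_continuous T a t x -> strip_continuous T b t x ->
  strip_continuous T (fun s y => a s y - b s y) t x.
Proof.
  intros Ha Hb. unfold strip_continuous, continuous_within2 in *.
  eapply filterlim_comp_2; [exact Ha | exact Hb | apply filterlim_Rminus].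
Qed.

Lemma strip_continuous_mult (T : Rbar) (a b : R -> R -> R) (t x : R) :
  strip_continuous T a t x -> strip_continuous T b t x ->
  strip_continuous T (fun s y => a s y * b s y) t x.
Proof.
  intros Ha Hb. unfold strip_continuous, continuous_within2 in *.
  eapply filterlim_comp_2; [exact Ha | exact Hb | apply (filterlim_mult (K := R_AbsRing))].
Qed.

Lemma strip_continuous_comp (T : Rbar) (f : R -> R) (a : R -> R -> R) (t x : R) :
  strip_continuous T a t x -> continuous f (a t x) ->
  strip_continuous T (fun s y => f (a s y)) t x.
Proof. intros Ha Hf. eapply filterlim_comp; [exact Ha | exact Hf]. Qed.

Lemma MVT_near (f f' : R -> R) (x y : R) : (forall z, is_derive f z (f' z)) ->
  exists xi, Rabs (xi - x) <= Rabs (y - x) /\ f y - f x = f' xi * (y - x).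
Proof.
  intros Hd. destruct (MVT_gen f x y f') as [c [Hc Hm]].
  - intros; apply Hd.
  - intros; eapply continuity_pt_of_is_derive, Hd.
  - exists c. split; [| exact Hm].
    apply Rabs_le_between_min_max. rewrite Rmin_comm, Rmax_comm. exact Hc.
Qed.

(* Continuity in [x] comes from the mean value theorem and the local boundedness
   of [ux]. *)
Lemma strip_continuous_of_C1 (T : Rbar) (u ut ux : R -> R -> R) (t x : R) :
  C1_strip T u ut ux -> in_time T t -> strip_continuous T u t x.
Proof.
  intros Hu Ht. apply epsilon_strip_continuous. intros eps He.
  destruct (Hu t x Ht) as [H1 [_ [_ H4]]].
  destruct (strip_continuous_epsilon T ux t x H4 1 Rlt_0_1) as [d1 [Hd1 Hd1']].
  destruct (time_continuous_of_deriv T _ t _ (is_time_deriv_within T _ t _ H1)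
              (eps / 2) ltac:(lra)) as [d2 [Hd2 Hd2']].
  set (B := Rabs (ux t x) + 1).
  assert (HB : 0 < B) by (unfold B; generalize (Rabs_pos (ux t x)); lra).
  set (d3 := eps / (2 * B)).
  assert (Hd3 : 0 < d3) by (unfold d3; apply Rdiv_lt_0_compat; lra).
  exists (Rmin d1 (Rmin d2 d3)); split; [repeat apply Rmin_pos; lra |].
  intros s y Hs Hst Hyx.
  assert (M1 := Rmin_l d1 (Rmin d2 d3)). assert (M2 := Rmin_r d1 (Rmin d2 d3)).
  assert (M3 := Rmin_l d2 d3). assert (M4 := Rmin_r d2 d3).
  destruct (MVT_near (u s) (ux s) x y) as [xi [Hxi Hm]]; [intros z; apply (Hu s z Hs) |].
  assert (Kx := Hd1' s xi Hs ltac:(lra) ltac:(lra)).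
  assert (Kux : Rabs (ux s xi) <= B).
  { unfold B. replace (ux s xi) with ((ux s xi - ux t x) + ux t x) by ring.
    eapply Rle_trans; [apply Rabs_triang | lra]. }
  assert (Kt := Hd2' s Hs ltac:(lra)).
  replace (u s y - u t x) with ((u s y - u s x) + (u s x - u t x)) by ring.
  eapply Rle_lt_trans; [apply Rabs_triang |]. rewrite Hm, Rabs_mult.
  assert (Rabs (ux s xi) * Rabs (y - x) <= B * d3)
    by (apply Rmult_le_compat; try apply Rabs_pos; lra).
  assert (B * d3 = eps / 2) by (unfold d3; field; lra). lra.
Qed.

Lemma time_continuous_along_curve (T : Rbar) (G : R -> R -> R) (X : R -> R) (t : R) :
  strip_continuous T G t (X t) -> time_continuous T X t ->
  time_continuous T (fun s => G s (X s)) t.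
Proof.
  intros HG HX eps He.
  destruct (strip_continuous_epsilon T G t (X t) HG eps He) as [d [Hd Hd']].
  destruct (HX d Hd) as [d2 [Hd2 Hd2']].
  exists (Rmin d d2); split; [apply Rmin_pos; lra |].
  intros s Hs Hst. assert (M1 := Rmin_l d d2). assert (M2 := Rmin_r d d2).
  apply Hd'; [exact Hs | lra | apply Hd2'; [exact Hs | lra]].
Qed.

Lemma time_continuous_minus (T : Rbar) (f g : R -> R) (t : R) :
  time_continuous T f t -> time_continuous T g t ->
  time_continuous T (fun s => f s - g s) t.
Proof.
  intros Hf Hg. apply (time_continuous_along_curve T (fun s y => f s - y) g t); [| exact Hg].
  apply epsilon_strip_continuous. intros eps He.
  destruct (Hf (eps / 2) ltac:(lra)) as [d [Hd Hd']].
  exists (Rmin d (eps / 2)); split; [apply Rmin_pos; lra |].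
  intros s y Hs H1 H2. assert (M1 := Rmin_l d (eps / 2)). assert (M2 := Rmin_r d (eps / 2)).
  assert (K := Hd' s Hs ltac:(lra)).
  replace (f s - y - (f t - g t)) with ((f s - f t) + - (y - g t)) by ring.
  eapply Rle_lt_trans; [apply Rabs_triang |]. rewrite Rabs_Ropp. lra.
Qed.

Lemma time_continuous_comp (T : Rbar) (f g : R -> R) (t : R) :
  time_continuous T g t -> continuous f (g t) -> time_continuous T (fun s => f (g s)) t.
Proof.
  intros Hg Hf eps He.
  destruct (continuous_epsilon f _ Hf eps He) as [e [He1 He2]].
  destruct (Hg e He1) as [d [Hd Hd']].
  exists d; split; [exact Hd |]. intros s Hs Hst. apply He2, Hd'; assumption.
Qed.

Lemma is_time_deriv_plus (T : Rbar) (f g h : R -> R) (t l1 l2 l : R) :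
  is_time_deriv T f t l1 -> is_time_deriv T g t l2 ->
  (forall s, h s = f s + g s) -> l = l1 + l2 -> is_time_deriv T h t l.
Proof.
  intros Hf Hg Hh Hl eps He.
  destruct (Hf (eps / 2) ltac:(lra)) as [d1 [Hd1 Hd1']].
  destruct (Hg (eps / 2) ltac:(lra)) as [d2 [Hd2 Hd2']].
  exists (Rmin d1 d2); split; [apply Rmin_pos; lra |].
  intros s Hs Hst Hsd. assert (M1 := Rmin_l d1 d2). assert (M2 := Rmin_r d1 d2).
  assert (K1 := Hd1' s Hs Hst ltac:(lra)). assert (K2 := Hd2' s Hs Hst ltac:(lra)).
  replace ((h s - h t) / (s - t) - l)
    with (((f s - f t) / (s - t) - l1) + ((g s - g t) / (s - t) - l2))
    by (rewrite !Hh, Hl; field; lra).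
  eapply Rle_lt_trans; [apply Rabs_triang | lra].
Qed.

(* The mean value theorem in [x] turns the quotient into [ux s xi * (X s - X t) / (s - t)]. *)
Lemma is_time_deriv_space_increment (T : Rbar) (u ut ux : R -> R -> R) (X : R -> R) (t d : R) :
  C1_strip T u ut ux -> in_time T t -> is_time_deriv T X t d ->
  is_time_deriv T (fun s => u s (X s) - u s (X t)) t (ux t (X t) * d).
Proof.
  intros Hu Ht HX eps He.
  destruct (Hu t (X t) Ht) as [_ [_ [_ H4]]].
  set (A := Rabs (ux t (X t)) + 1). set (Dd := Rabs d + 1).
  assert (HA : 0 < A) by (unfold A; generalize (Rabs_pos (ux t (X t))); lra).
  assert (HDd : 0 < Dd) by (unfold Dd; generalize (Rabs_pos d); lra).
  set (e1 := Rmin 1 (eps / (2 * A))).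
  assert (He1 : 0 < e1) by (apply Rmin_pos; [lra | apply Rdiv_lt_0_compat; lra]).
  assert (E1 : e1 <= 1) by apply Rmin_l. assert (E2 : e1 <= eps / (2 * A)) by apply Rmin_r.
  destruct (HX e1 He1) as [d1 [Hd1 Hd1']].
  destruct (strip_continuous_epsilon T ux t (X t) H4 (eps / (2 * Dd))) as [d2 [Hd2 Hd2']].
  { apply Rdiv_lt_0_compat; lra. }
  destruct (time_continuous_of_deriv T X t d HX d2 Hd2) as [d3 [Hd3 Hd3']].
  exists (Rmin d1 (Rmin d2 d3)); split; [repeat apply Rmin_pos; lra |].
  intros s Hs Hst Hsd.
  assert (M1 := Rmin_l d1 (Rmin d2 d3)). assert (M2 := Rmin_r d1 (Rmin d2 d3)).
  assert (M3 := Rmin_l d2 d3). assert (M4 := Rmin_r d2 d3).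
  destruct (MVT_near (u s) (ux s) (X t) (X s)) as [xi [Hxi Hm]]; [intros z; apply (Hu s z Hs) |].
  set (q := (X s - X t) / (s - t)).
  assert (Hq : Rabs (q - d) < e1) by (apply Hd1'; [exact Hs | exact Hst | lra]).
  assert (Hqb : Rabs q <= Dd).
  { unfold Dd. replace q with ((q - d) + d) by ring.
    eapply Rle_trans; [apply Rabs_triang | lra]. }
  assert (HXs := Hd3' s Hs ltac:(lra)).
  assert (Hux : Rabs (ux s xi - ux t (X t)) < eps / (2 * Dd))
    by (apply Hd2'; [exact Hs | lra | lra]).
  replace ((u s (X s) - u s (X t) - (u t (X t) - u t (X t))) / (s - t) - ux t (X t) * d)
    with ((ux s xi - ux t (X t)) * q + ux t (X t) * (q - d)) by (unfold q; rewrite Hm; field; lra).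
  eapply Rle_lt_trans; [apply Rabs_triang |]. rewrite !Rabs_mult.
  assert (Rabs (ux s xi - ux t (X t)) * Rabs q < eps / (2 * Dd) * Dd).
  { apply Rle_lt_trans with (Rabs (ux s xi - ux t (X t)) * Dd);
      [apply Rmult_le_compat_l; [apply Rabs_pos | exact Hqb] | apply Rmult_lt_compat_r; lra]. }
  assert (Rabs (ux t (X t)) * Rabs (q - d) <= A * (eps / (2 * A)))
    by (apply Rmult_le_compat; try apply Rabs_pos; unfold A in *; lra).
  assert (eps / (2 * Dd) * Dd = eps / 2) by (field; lra).
  assert (A * (eps / (2 * A)) = eps / 2) by (field; lra).
  lra.
Qed.

Lemma is_time_deriv_along_curve (T : Rbar) (u ut ux : R -> R -> R) (X : R -> R) (t d : R) :
  C1_strip T u ut ux -> in_time T t -> is_time_deriv T X t d ->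
  is_time_deriv T (fun s => u s (X s)) t (ut t (X t) + ux t (X t) * d).
Proof.
  intros Hu Ht HX.
  apply (is_time_deriv_plus T (fun s => u s (X s) - u s (X t)) (fun s => u s (X t)) _ t
           (ux t (X t) * d) (ut t (X t))).
  - apply (is_time_deriv_space_increment T u ut ux); assumption.
  - apply is_time_deriv_within, (Hu t (X t) Ht).
  - intros s. ring.
  - ring.
Qed.

(* Young's inequality [2 |E| eta <= E ^ 2 + eta ^ 2] absorbs the inhomogeneous term. *)
Lemma affine_growth_le (E p q M eta : R) : 0 <= M -> Rabs p <= M -> Rabs q <= eta ->
  2 * E * (p * E + q) <= (2 * M + 1) * (E * E + eta * eta).
Proof.
  intros HM Hp Hq.
  assert (B1 : 2 * E * (p * E + q) <= 2 * Rabs E * (M * Rabs E + eta)).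
  { eapply Rle_trans; [apply Rle_abs |].
    rewrite !Rabs_mult, (Rabs_right 2) by lra.
    apply Rmult_le_compat_l; [generalize (Rabs_pos E); lra |].
    eapply Rle_trans; [apply Rabs_triang |]. rewrite Rabs_mult.
    generalize (Rabs_pos E); nra. }
  assert (B2 : Rabs E * Rabs E = E * E) by (rewrite <- Rabs_mult; apply Rabs_right; nra).
  assert (B3 := Rle_0_sqr (Rabs E - eta)). unfold Rsqr in B3.
  assert (0 <= M * (eta * eta)) by (apply Rmult_le_pos; [lra | apply Rle_0_sqr]).
  nra.
Qed.

Section InitialDataDependence.

Variables (T : Rbar) (F Fx X : R -> R -> R) (a t0 : R).
Hypothesis HT : Rbar_lt 0 T.
Hypothesis HF : forall s y, in_time T s -> is_derive (F s) y (Fx s y).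
Hypothesis HFx : forall s y, in_time T s -> strip_continuous T Fx s y.
Hypothesis HX : forall s al, in_time T s ->
  is_time_deriv T (fun s => X s al) s (F s (X s al)).
Hypothesis HX0 : forall al, X 0 al = al.
Hypothesis Ht0 : in_time T t0.

Let gap (h s : R) : R := X s (a + h) - X s a.

Lemma time_continuous_flow (al s : R) : in_time T s -> time_continuous T (fun s => X s al) s.
Proof. intros Hs. eapply time_continuous_of_deriv, HX, Hs. Qed.

Lemma is_derive_gap (h s : R) : 0 < s <= t0 ->
  is_derive (gap h) s (F s (X s (a + h)) - F s (X s a)).
Proof.
  intros Hs. assert (Hi := in_time_le T s t0 Ht0 ltac:(lra)).
  apply (is_derive_minus (fun s => X s (a + h)) (fun s => X s a));
    apply (is_derive_of_time_deriv T _ s _ Hi ltac:(lra)), HX, Hi.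
Qed.

Lemma gap_mean_value (h s : R) : 0 <= s <= t0 -> exists xi,
  Rabs (xi - X s a) <= Rabs (gap h s) /\
  F s (X s (a + h)) - F s (X s a) = Fx s xi * gap h s.
Proof.
  intros Hs. apply MVT_near. intros z. apply HF, (in_time_le T s t0 Ht0 Hs).
Qed.

Lemma continuous_gap_clamp (h : R) : continuous (fun s => gap h (Rmax 0 s)) 0.
Proof.
  assert (H0 : in_time T 0) by (split; [lra | exact HT]).
  apply (continuous_clamp T); [exact HT | exact HT |].
  rewrite Rmax_left by lra.
  apply time_continuous_minus; apply time_continuous_flow, H0.
Qed.

Lemma Fx_bounded_near_flow : exists d1 M, 0 < d1 /\ 0 <= M /\
  forall s y, 0 <= s <= t0 -> Rabs (y - X s a) < d1 -> Rabs (Fx s y) <= M.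
Proof.
  destruct (uniform_continuity_along_curve T Fx (fun s => X s a) t0 1
    (fun s Hs => HFx s (X s a) Hs) (fun s Hs => time_continuous_flow a s Hs) Ht0 Rlt_0_1)
    as [d1 [Hd1 Hd1']].
  destruct (time_continuous_bounded T (fun s => Fx s (X s a)) t0 HT) as [Mp HMp];
    [| exact Ht0 |].
  { intros s Hs. apply time_continuous_along_curve;
      [apply HFx, Hs | apply time_continuous_flow, Hs]. }
  exists d1, (Rabs Mp + 1). split; [exact Hd1 | split; [generalize (Rabs_pos Mp); lra |]].
  intros s y Hs Hy. specialize (Hd1' s y Hs Hy). specialize (HMp s Hs).
  assert (Mp <= Rabs Mp) by apply Rle_abs.
  replace (Fx s y) with ((Fx s y - Fx s (X s a)) + Fx s (X s a)) by ring.
  eapply Rle_trans; [apply Rabs_triang | lra].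
Qed.

Variable c : R -> R.
Hypothesis Hc0 : c 0 = 1.
Hypothesis Hc : forall s, in_time T s -> 0 < s -> is_derive c s (Fx s (X s a) * c s).
Hypothesis Hcc : continuous c 0.

Let lin_err (h s : R) : R := gap h s - h * c s.

Lemma is_derive_lin_err (h s : R) : 0 < s <= t0 ->
  is_derive (lin_err h) s ((F s (X s (a + h)) - F s (X s a)) - h * (Fx s (X s a) * c s)).
Proof.
  intros Hs.
  apply (is_derive_minus (gap h) (fun s => h * c s)); [apply is_derive_gap, Hs |].
  apply (is_derive_scal c), Hc; [apply (in_time_le T s t0 Ht0) | ]; lra.
Qed.

Lemma continuous_lin_err_clamp (h : R) : continuous (fun s => lin_err h (Rmax 0 s)) 0.
Proof.
  apply (continuous_minus (fun s => gap h (Rmax 0 s)) (fun s => h * c (Rmax 0 s)));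
    [apply continuous_gap_clamp |].
  apply (continuous_scal_r h (fun s => c (Rmax 0 s))).
  apply (continuous_comp (fun s => Rmax 0 s) c); [apply continuous_Rmax0 |].
  rewrite Rmax_left by lra. exact Hcc.
Qed.

Section GapBounds.

Variables (d1 M : R).
Hypothesis Hd1 : 0 < d1.
Hypothesis HM0 : 0 <= M.
Hypothesis HM : forall s y, 0 <= s <= t0 -> Rabs (y - X s a) < d1 -> Rabs (Fx s y) <= M.

Lemma gap_sqr_bound (h t : R) : 0 <= t <= t0 ->
  (forall s, 0 <= s <= t -> Rabs (gap h s) < d1) ->
  gap h t * gap h t <= h * h * exp (2 * M * t0).
Proof.
  intros Ht Hbd.
  apply Rle_trans with (gap h 0 * gap h 0 * exp (2 * M * t)).
  - apply (gronwall (fun s => gap h s * gap h s)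
             (fun s => 2 * gap h s * (F s (X s (a + h)) - F s (X s a)))); [lra | | |].
    + intros s Hs. eapply is_derive_congr.
      * apply (is_derive_mult (gap h) (gap h)); [apply is_derive_gap; lra .. |].
        intros; apply Rmult_comm.
      * reflexivity.
      * unfold plus, mult; simpl; ring.
    + intros s Hs. destruct (gap_mean_value h s ltac:(lra)) as [xi [Hxi Exi]]. rewrite Exi.
      assert (Hb := HM s xi ltac:(lra) ltac:(specialize (Hbd s ltac:(lra)); lra)).
      assert (Fx s xi <= M) by (eapply Rle_trans; [apply Rle_abs | exact Hb]).
      assert (0 <= gap h s * gap h s) by nra. nra.
    + apply (continuous_mult (fun s => gap h (Rmax 0 s)) (fun s => gap h (Rmax 0 s)));
        apply continuous_gap_clamp.
  - unfold gap. rewrite !HX0. replace (a + h - a) with h by ring.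
    apply Rmult_le_compat_l; [nra | apply exp_le_exp_of_le; nra].
Qed.

Lemma gap_bound (h : R) : Rabs h * exp (2 * M * t0) < d1 / 2 ->
  forall t, 0 <= t <= t0 -> Rabs (gap h t) < d1 /\ Rabs (gap h t) <= Rabs h * exp (2 * M * t0).
Proof.
  intros Hh.
  set (K1 := exp (2 * M * t0)) in *.
  assert (HK1 : 1 <= K1) by (generalize (exp_ineq1_le (2 * M * t0)) (proj1 Ht0); unfold K1; nra).
  assert (Hsq : forall x, x * x <= h * h * K1 -> Rabs x <= Rabs h * K1).
  { intros x Hx. rewrite <- (Rabs_right (Rabs h * K1)) by (generalize (Rabs_pos h); nra).
    apply Rsqr_le_abs_0. unfold Rsqr.
    replace (Rabs h * K1 * (Rabs h * K1)) with (Rabs h * Rabs h * K1 * K1) by ring.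
    rewrite <- Rabs_mult, Rabs_right by nra. nra. }
  assert (Htube : forall t, 0 <= t <= t0 -> Rabs (gap h t) < d1).
  { apply (continuity_bootstrap T (gap h) t0 d1 Ht0 Hd1).
    - unfold gap. rewrite !HX0. replace (a + h - a) with h by ring. nra.
    - intros s Hs. apply time_continuous_minus; apply time_continuous_flow, Hs.
    - intros t Ht Hbd. assert (K := Hsq _ (gap_sqr_bound h t Ht Hbd)). lra. }
  intros t Ht. split; [apply Htube, Ht |].
  apply Hsq, gap_sqr_bound; [exact Ht |]. intros s Hs. apply Htube. lra.
Qed.

(* [c] solves the linearized equation, so [E := gap h - h c] obeys
   [E' = Fx E + (Fx xi - Fx) gap]; Gronwall applied to [E ^ 2 + eta ^ 2] controls it. *)
Lemma linearization_error (e' d2 h : R) :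
  (forall s y, 0 <= s <= t0 -> Rabs (y - X s a) < d2 -> Rabs (Fx s y - Fx s (X s a)) < e') ->
  Rabs h * exp (2 * M * t0) < d1 / 2 -> Rabs h * exp (2 * M * t0) < d2 ->
  lin_err h t0 * lin_err h t0 <= (e' * (Rabs h * exp (2 * M * t0))) ^ 2 * exp ((2 * M + 1) * t0).
Proof.
  intros Hd2 Hh1 Hh2.
  set (eta := e' * (Rabs h * exp (2 * M * t0))).
  set (E := lin_err h).
  assert (G : E t0 * E t0 + eta * eta <= (E 0 * E 0 + eta * eta) * exp ((2 * M + 1) * t0)).
  { apply (gronwall (fun s => E s * E s + eta * eta)
      (fun s => 2 * E s * ((F s (X s (a + h)) - F s (X s a)) - h * (Fx s (X s a) * c s))));
      [apply Ht0 | | |].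
    - intros s Hs. eapply is_derive_congr.
      + apply (is_derive_plus (fun s => E s * E s) (fun _ => eta * eta)); [| apply is_derive_const].
        apply (is_derive_mult E E); [apply is_derive_lin_err, Hs .. | intros; apply Rmult_comm].
      + reflexivity.
      + unfold plus, mult, zero; simpl. ring.
    - intros s Hs. destruct (gap_mean_value h s ltac:(lra)) as [xi [Hxi Exi]]. rewrite Exi.
      destruct (gap_bound h Hh1 s ltac:(lra)) as [Htube Hgap].
      replace (Fx s xi * gap h s - h * (Fx s (X s a) * c s)) with
        (Fx s (X s a) * E s + (Fx s xi - Fx s (X s a)) * gap h s) by (unfold E, lin_err; ring).
      apply affine_growth_le; [exact HM0 | apply HM; [lra | rewrite Rminus_eq_0, Rabs_R0; lra] |].
      unfold eta. rewrite Rabs_mult.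
      apply Rmult_le_compat; try apply Rabs_pos; [apply Rlt_le, Hd2 | ]; lra.
    - apply (continuous_plus (fun s => E (Rmax 0 s) * E (Rmax 0 s)) (fun _ => eta * eta));
        [| apply continuous_const].
      apply (continuous_mult (fun s => E (Rmax 0 s)) (fun s => E (Rmax 0 s)));
        apply continuous_lin_err_clamp. }
  assert (HE0 : E 0 = 0) by (unfold E, lin_err, gap; rewrite !HX0, Hc0; ring).
  rewrite HE0 in G.
  assert (0 <= eta * eta) by apply Rle_0_sqr.
  assert (1 <= exp ((2 * M + 1) * t0))
    by (generalize (exp_ineq1_le ((2 * M + 1) * t0)) (proj1 Ht0); nra).
  simpl. fold eta. nra.
Qed.

End GapBounds.

Lemma is_derive_flow_initial : is_derive (fun al => X t0 al) a (c t0).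
Proof.
  destruct Fx_bounded_near_flow as [d1 [M [Hd1 [HM0 HM]]]].
  set (K1 := exp (2 * M * t0)). set (K2 := exp ((2 * M + 1) * t0)).
  assert (HK1 : 1 <= K1) by (generalize (exp_ineq1_le (2 * M * t0)) (proj1 Ht0); unfold K1; nra).
  assert (HK2 : 1 <= K2)
    by (generalize (exp_ineq1_le ((2 * M + 1) * t0)) (proj1 Ht0); unfold K2; nra).
  apply is_derive_Reals. intros eps He.
  set (e' := eps / (2 * K1 * K2)).
  assert (He' : 0 < e') by (unfold e'; apply Rdiv_lt_0_compat; nra).
  destruct (uniform_continuity_along_curve T Fx (fun s => X s a) t0 e'
    (fun s Hs => HFx s (X s a) Hs) (fun s Hs => time_continuous_flow a s Hs) Ht0 He')
    as [d2 [Hd2 Hd2']].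
  assert (Hdel : 0 < Rmin (d1 / (2 * K1)) (d2 / K1))
    by (apply Rmin_pos; apply Rdiv_lt_0_compat; lra).
  exists (mkposreal _ Hdel). intros h Hh Hhd. simpl in Hhd.
  assert (Hh1 : Rabs h * K1 < d1 / 2).
  { apply Rlt_le_trans with (d1 / (2 * K1) * K1); [| right; field; lra].
    apply Rmult_lt_compat_r; [lra |]. eapply Rlt_le_trans; [exact Hhd | apply Rmin_l]. }
  assert (Hh2 : Rabs h * K1 < d2).
  { apply Rlt_le_trans with (d2 / K1 * K1); [| right; field; lra].
    apply Rmult_lt_compat_r; [lra |]. eapply Rlt_le_trans; [exact Hhd | apply Rmin_r]. }
  assert (HE := linearization_error d1 M Hd1 HM0 HM e' d2 h Hd2' Hh1 Hh2). simpl in HE.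
  fold K1 K2 in HE. unfold lin_err, gap in HE.
  set (E := X t0 (a + h) - X t0 a - h * c t0) in HE.
  replace ((X t0 (a + h) - X t0 a) / h - c t0) with (E / h) by (unfold E; field; exact Hh).
  rewrite <- (Rabs_right eps) by lra. apply Rsqr_lt_abs_0. unfold Rsqr.
  assert (Hhh : 0 < h * h) by nra.
  assert (Eh : Rabs h * Rabs h = h * h) by (rewrite <- Rabs_mult; apply Rabs_right; nra).
  apply Rle_lt_trans with (e' * e' * K1 * K1 * K2).
  - replace (E / h * (E / h)) with (E * E / (h * h)) by (field; exact Hh).
    apply (Rmult_le_reg_r (h * h)); [exact Hhh |].
    replace (E * E / (h * h) * (h * h)) with (E * E) by (field; lra).
    rewrite <- Eh. lra.
  - replace (e' * e' * K1 * K1 * K2) with (eps * eps / (4 * K2)) by (unfold e'; field; lra).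
    apply (Rmult_lt_reg_r (4 * K2)); [lra |].
    replace (eps * eps / (4 * K2) * (4 * K2)) with (eps * eps) by (field; lra). nra.
Qed.

End InitialDataDependence.

Section Characteristic.

Variables (T : Rbar) (sg : R) (u v ut ux vt vx X : R -> R -> R).
Hypothesis HT : Rbar_lt 0 T.
Hypothesis Hsg : sg * sg = 1.
Hypothesis Hu : C1_strip T u ut ux.
Hypothesis Hv : C1_strip T v vt vx.
Hypothesis Hpu : forall t x, in_time T t ->
  ut t x + sg * k (sg * (u t x - v t x)) * ux t x = 0.
Hypothesis Hpv : forall t x, in_time T t ->
  vt t x - sg * k (sg * (u t x - v t x)) * vx t x = 0.
Hypothesis Hv0 : forall x, v 0 x = - u 0 x.
Hypothesis HX : forall t al, in_time T t ->
  is_derive_within (in_time T) (fun s => X s al) t (sg * k (sg * (u t (X t al) - v t (X t al)))).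
Hypothesis HX0 : forall al, X 0 al = al.

Let F (s y : R) : R := sg * k (sg * (u s y - v s y)).
Let Fx (s y : R) : R := dk (sg * (u s y - v s y)) * (ux s y - vx s y).

Lemma in_time_0 : in_time T 0.
Proof. split; [lra | exact HT]. Qed.

Lemma is_derive_speed (s y : R) : in_time T s -> is_derive (F s) y (Fx s y).
Proof.
  intros Hs.
  assert (Du := proj1 (proj2 (Hu s y Hs))). assert (Dv := proj1 (proj2 (Hv s y Hs))).
  eapply is_derive_congr.
  - apply is_derive_scal, (is_derive_comp k (fun y => sg * (u s y - v s y))); [apply is_derive_k |].
    apply is_derive_scal, (is_derive_minus (u s) (v s)); [exact Du | exact Dv].
  - reflexivity.
  - unfold Fx, scal, minus, plus, opp; simpl; unfold mult; simpl.
    transitivity ((sg * sg) * dk (sg * (u s y - v s y)) * (ux s y - vx s y)); [ring |].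
    rewrite Hsg. ring.
Qed.

Lemma strip_continuous_speed_derivative (s y : R) : in_time T s -> strip_continuous T Fx s y.
Proof.
  intros Hs.
  apply strip_continuous_mult.
  - apply (strip_continuous_comp T (fun z => dk (sg * z)) (fun s y => u s y - v s y)).
    + apply strip_continuous_minus; eapply strip_continuous_of_C1; eauto.
    + apply (continuous_comp (fun z => sg * z) dk); [| apply continuous_dk].
      apply (ex_derive_continuous (fun z => sg * z)). auto_derive. auto.
  - apply strip_continuous_minus; [apply (Hu s y Hs) | apply (Hv s y Hs)].
Qed.

Lemma is_time_deriv_characteristic (s al : R) : in_time T s ->
  is_time_deriv T (fun s => X s al) s (F s (X s al)).
Proof. intros Hs. apply is_time_deriv_within, HX, Hs. Qed.

Lemma constant_along_characteristic (al s : R) : in_time T s -> u s (X s al) = u 0 al.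
Proof.
  intros Hs.
  assert (Hd : forall s', in_time T s' -> is_time_deriv T (fun s => u s (X s al)) s'
      (ut s' (X s' al) + ux s' (X s' al) * F s' (X s' al)))
    by (intros s' Hs'; apply (is_time_deriv_along_curve T u ut ux (fun s => X s al) s');
        [exact Hu | exact Hs' |
        apply (is_time_deriv_characteristic s' al Hs')]).
  rewrite <- (HX0 al) at 2.
  apply (constant_from_0 (fun s => u s (X s al)) s (proj1 Hs)).
  - intros s' Hs'. assert (Hi := in_time_le T s' s Hs ltac:(lra)).
    eapply is_derive_congr; [apply (is_derive_of_time_deriv T _ s' _ Hi ltac:(lra) (Hd s' Hi)) |
      reflexivity |].
    unfold F. rewrite <- (Hpu s' (X s' al) Hi). ring.
  - apply (continuous_clamp T (fun s => u s (X s al))); [exact HT | exact HT |].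
    rewrite Rmax_left by lra. eapply time_continuous_of_deriv, Hd, in_time_0.
Qed.

Variable a : R.
Let p (s : R) : R := Fx s (X s a).
(* The solution of the variational equation along the characteristic from [a]. *)
Let c (s : R) : R := exp (RInt (fun tau => p (Rmax 0 tau)) 0 s).
Let eta (s : R) : R := sg * (u 0 a - v s (X s a)).

Lemma is_derive_c (s : R) : Rbar_lt s T -> is_derive c s (p (Rmax 0 s) * c s).
Proof.
  intros Hs.
  eapply is_derive_congr; [| reflexivity | unfold scal; simpl; unfold mult; simpl; reflexivity].
  apply (is_derive_comp exp (fun s => RInt (fun tau => p (Rmax 0 tau)) 0 s));
    [apply is_derive_exp |].
  apply (is_derive_RInt_clamp T p s HT Hs). intros s' Hs'.
  apply (time_continuous_along_curve T Fx (fun s => X s a) s');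
    [apply strip_continuous_speed_derivative, Hs' |
     eapply time_continuous_of_deriv, (is_time_deriv_characteristic s' a Hs')].
Qed.

Lemma is_derive_characteristic_initial (t0 : R) : in_time T t0 ->
  is_derive (fun al => X t0 al) a (c t0).
Proof.
  intros Ht0. apply (is_derive_flow_initial T F Fx X a t0 HT); try assumption.
  - exact is_derive_speed.
  - exact strip_continuous_speed_derivative.
  - exact is_time_deriv_characteristic.
  - unfold c. rewrite RInt_point. apply exp_0.
  - intros s Hs Hpos. eapply is_derive_congr; [apply is_derive_c, Hs | reflexivity |].
    rewrite Rmax_right by lra. reflexivity.
  - eapply continuous_of_is_derive, is_derive_c, HT.
Qed.

(* Differentiating [u s (X s al) = u 0 al] in [al]. *)
Lemma ux_transport (s : R) : in_time T s -> ux s (X s a) * c s = ux 0 a.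
Proof.
  intros Hs.
  assert (D1 : is_derive (fun al => u s (X s al)) a (scal (c s) (ux s (X s a))))
    by (apply (is_derive_comp (u s)); [apply (Hu s (X s a) Hs) |
        apply is_derive_characteristic_initial, Hs]).
  assert (D2 : is_derive (fun al => u 0 al) a (ux 0 a)) by apply (Hu 0 a in_time_0).
  apply (is_derive_ext _ _ _ _ (fun al => constant_along_characteristic al s Hs)) in D1.
  assert (E : scal (c s) (ux s (X s a)) = ux 0 a).
  { transitivity (Derive (fun al => u 0 al) a); [symmetry |]; apply is_derive_unique; assumption. }
  rewrite <- E. unfold scal; simpl; unfold mult; simpl. ring.
Qed.

Lemma is_time_deriv_v_along (s : R) : in_time T s ->
  is_time_deriv T (fun s => v s (X s a)) s (vt s (X s a) + vx s (X s a) * F s (X s a)).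
Proof.
  intros Hs. apply (is_time_deriv_along_curve T v vt vx (fun s => X s a) s); [exact Hv | exact Hs |].
  apply (is_time_deriv_characteristic s a Hs).
Qed.

Lemma speed_argument_along (s : R) : in_time T s -> sg * (u s (X s a) - v s (X s a)) = eta s.
Proof. intros Hs. unfold eta. rewrite constant_along_characteristic by exact Hs. reflexivity. Qed.

Lemma is_derive_eta (s : R) : in_time T s -> 0 < s ->
  is_derive eta s (-2 * k (eta s) * vx s (X s a)).
Proof.
  intros Hs Hpos.
  eapply is_derive_congr.
  - apply is_derive_scal, (is_derive_minus (fun _ => u 0 a) (fun s => v s (X s a)));
      [apply is_derive_const | apply (is_derive_of_time_deriv T _ s _ Hs Hpos), is_time_deriv_v_along, Hs].
  - reflexivity.
  - assert (K := Hpv s (X s a) Hs).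
    unfold F in *. rewrite (speed_argument_along s Hs) in *.
    unfold minus, plus, opp, zero, scal; simpl; unfold mult; simpl.
    replace (vt s (X s a)) with (sg * k (eta s) * vx s (X s a)) by lra.
    transitivity (-2 * (sg * sg) * k (eta s) * vx s (X s a)); [ring |]. rewrite Hsg. ring.
Qed.

Lemma time_continuous_eta (s : R) : in_time T s -> time_continuous T eta s.
Proof.
  intros Hs. apply (time_continuous_comp T (fun z => sg * (u 0 a - z)) (fun s => v s (X s a))).
  - eapply time_continuous_of_deriv, is_time_deriv_v_along, Hs.
  - apply (ex_derive_continuous (fun z => sg * (u 0 a - z))). auto_derive. auto.
Qed.

(* The heart of the computation: with [k = sqrt k ^ 2] and [ux * c = ux 0 a],
   the [vx]-terms of [c'] and of [(sqrt (k eta))'] cancel. *)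
Lemma is_derive_ratio (s : R) : in_time T s -> 0 < s ->
  is_derive (fun s => c s / sqrt (k (eta s))) s (ux 0 a * fk (eta s)).
Proof.
  intros Hs Hpos.
  assert (DS : is_derive (fun s => sqrt (k (eta s))) s
                 (dk (eta s) * (-2 * k (eta s) * vx s (X s a)) / (2 * sqrt (k (eta s))))).
  { apply (is_derive_sqrt (fun s => k (eta s))); [| generalize (k_ge1 (eta s)); lra].
    eapply is_derive_congr;
      [apply (is_derive_comp k eta); [apply is_derive_k | apply is_derive_eta; assumption] |
       reflexivity |].
    unfold scal; simpl; unfold mult; simpl. ring. }
  assert (HS := sqrt_k_pos (eta s)).
  eapply is_derive_congr;
    [apply (is_derive_div c); [apply is_derive_c, Hs | exact DS | lra] | reflexivity |].
  assert (Hp : p (Rmax 0 s) = dk (eta s) * (ux s (X s a) - vx s (X s a))).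
  { rewrite Rmax_right by lra. unfold p, Fx. rewrite speed_argument_along by exact Hs. reflexivity. }
  rewrite Hp. unfold fk. rewrite Derive_k, <- (ux_transport s Hs).
  set (S := sqrt (k (eta s))) in *.
  assert (HSS : S * S = k (eta s)) by (apply sqrt_sqrt; generalize (k_ge1 (eta s)); lra).
  rewrite <- HSS. field. lra.
Qed.

Let I (s : R) : R := RInt (fun tau => fk (eta (Rmax 0 tau))) 0 s.

Lemma is_derive_I (s : R) : Rbar_lt s T -> is_derive I s (fk (eta (Rmax 0 s))).
Proof.
  intros Hs. apply (is_derive_RInt_clamp T (fun s => fk (eta s)) s HT Hs).
  intros s' Hs'. apply time_continuous_comp; [apply time_continuous_eta, Hs' | apply continuous_fk].
Qed.

Lemma continuous_ratio_clamp :
  continuous (fun s => c (Rmax 0 s) / sqrt (k (eta (Rmax 0 s))) - ux 0 a * I (Rmax 0 s)) 0.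
Proof.
  apply (continuous_minus (fun s => c (Rmax 0 s) / sqrt (k (eta (Rmax 0 s))))
                          (fun s => ux 0 a * I (Rmax 0 s))).
  - apply (continuous_mult (fun s => c (Rmax 0 s)) (fun s => / sqrt (k (eta (Rmax 0 s))))).
    + apply (continuous_comp (fun s => Rmax 0 s) c); [apply continuous_Rmax0 |].
      rewrite Rmax_left by lra. eapply continuous_of_is_derive, is_derive_c, HT.
    + apply (continuous_Rinv_comp (fun s => sqrt (k (eta (Rmax 0 s)))));
        [| apply Rgt_not_eq, sqrt_k_pos].
      apply (continuous_comp (fun s => eta (Rmax 0 s)) (fun z => sqrt (k z))).
      * apply (continuous_clamp T eta); [exact HT | exact HT |]. rewrite Rmax_left by lra.
        apply time_continuous_eta, in_time_0.
      * apply (continuous_comp k sqrt); [apply continuous_k | apply continuous_sqrt].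
  - apply (continuous_scal_r (ux 0 a) (fun s => I (Rmax 0 s))).
    apply (continuous_comp (fun s => Rmax 0 s) I); [apply continuous_Rmax0 |].
    rewrite Rmax_left by lra. eapply continuous_of_is_derive, is_derive_I, HT.
Qed.

Lemma ratio_identity (t : R) : in_time T t ->
  c t / sqrt (k (eta t)) = / sqrt (k (2 * sg * u 0 a)) + ux 0 a * I t.
Proof.
  intros Ht.
  assert (Hw : c t / sqrt (k (eta t)) - ux 0 a * I t = c 0 / sqrt (k (eta 0)) - ux 0 a * I 0).
  { apply (constant_from_0 (fun s => c s / sqrt (k (eta s)) - ux 0 a * I s) t (proj1 Ht));
      [| apply continuous_ratio_clamp].
    intros s Hs. assert (Hi := in_time_le T s t Ht ltac:(lra)).
    eapply is_derive_congr.
    - apply (is_derive_minus (fun s => c s / sqrt (k (eta s))) (fun s => ux 0 a * I s));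
        [apply is_derive_ratio; [exact Hi | lra] | apply is_derive_scal, is_derive_I, Hi].
    - reflexivity.
    - rewrite Rmax_right by lra. unfold minus, plus, opp, scal; simpl; unfold mult; simpl. ring. }
  assert (Hc0 : c 0 = 1) by (unfold c; rewrite RInt_point; apply exp_0).
  assert (HI0 : I 0 = 0) by (unfold I; rewrite RInt_point; reflexivity).
  assert (Heta0 : eta 0 = 2 * sg * u 0 a) by (unfold eta; rewrite HX0, Hv0; ring).
  rewrite Hc0, HI0, Heta0 in Hw. unfold Rdiv in Hw. lra.
Qed.

Lemma compression_ratio (t : R) : in_time T t -> is_derive (fun al => X t al) a
  (sqrt (k (sg * (u 0 a - v t (X t a))) / k (2 * sg * u 0 a)) *
   (1 + ux 0 a * sqrt (k (2 * sg * u 0 a)) *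
        RInt (fun tau => fk (sg * (u 0 a - v tau (X tau a)))) 0 t)).
Proof.
  intros Ht.
  assert (HIt : I t = RInt (fun tau => fk (sg * (u 0 a - v tau (X tau a)))) 0 t).
  { apply RInt_ext. intros x Hx. rewrite Rmin_left in Hx by apply Ht.
    rewrite Rmax_right by lra. reflexivity. }
  rewrite <- HIt.
  match goal with |- is_derive _ _ ?l => replace l with (c t) end;
    [apply is_derive_characteristic_initial, Ht |].
  rewrite sqrt_div_alt by (generalize (k_ge1 (2 * sg * u 0 a)); lra). fold (eta t).
  assert (Hw := ratio_identity t Ht).
  assert (HS := sqrt_k_pos (eta t)). assert (HS0 := sqrt_k_pos (2 * sg * u 0 a)).
  set (S := sqrt (k (eta t))) in *. set (S0 := sqrt (k (2 * sg * u 0 a))) in *.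
  replace (S / S0 * (1 + ux 0 a * S0 * I t)) with (S * (/ S0 + ux 0 a * I t)) by (field; lra).
  rewrite <- Hw. field. lra.
Qed.

End Characteristic.

Lemma forward_compression_ratio (w0 : R -> R) (T : Rbar) (r l rt rx lt lx x1 : R -> R -> R) :
  Rbar_lt 0 T -> C1_strip T r rt rx -> C1_strip T l lt lx ->
  (forall t x, in_time T t -> rt t x + k (r t x - l t x) * rx t x = 0) ->
  (forall t x, in_time T t -> lt t x - k (r t x - l t x) * lx t x = 0) ->
  (forall x, r 0 x = r0_of w0 x) -> (forall x, l 0 x = l0_of w0 x) ->
  (forall t a, in_time T t ->
     is_derive_within (in_time T) (fun s => x1 s a) t (k (r t (x1 t a) - l t (x1 t a)))) ->
  (forall a, x1 0 a = a) ->
  forall t a, in_time T t ->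
    is_derive (fun a' => x1 t a') a
      (sqrt (k (r0_of w0 a - l t (x1 t a)) / k (2 * r0_of w0 a)) *
       (1 + Derive (r0_of w0) a * sqrt (k (2 * r0_of w0 a)) *
            RInt (fun tau : R => fk (r0_of w0 a - l tau (x1 tau a))) 0 t)).
Proof.
  intros HT Hr Hl Hpde_r Hpde_l Hinit_r Hinit_l Hx1 Hx1_0 t a Ht.
  assert (H := compression_ratio T 1 r l rt rx lt lx x1 HT ltac:(ring) Hr Hl
    ltac:(intros t' x Ht'; rewrite !Rmult_1_l; apply Hpde_r, Ht')
    ltac:(intros t' x Ht'; rewrite !Rmult_1_l; apply Hpde_l, Ht')
    ltac:(intros x; rewrite Hinit_r, Hinit_l; unfold r0_of, l0_of; ring)
    ltac:(intros t' a' Ht'; rewrite !Rmult_1_l; apply Hx1, Ht')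
    Hx1_0 a t Ht).
  assert (Hd : Derive (r0_of w0) a = rx 0 a).
  { rewrite <- (Derive_ext (fun x => r 0 x) (r0_of w0) a Hinit_r).
    apply is_derive_unique, (Hr 0 a (conj (Rle_refl 0) HT)). }
  rewrite Hd, <- Hinit_r. rewrite !Rmult_1_l, Rmult_1_r in H.
  eapply is_derive_congr; [exact H | reflexivity |].
  f_equal. f_equal. f_equal. apply RInt_ext. intros x _. rewrite Rmult_1_l, Hinit_r. reflexivity.
Qed.

Lemma backward_compression_ratio (w0 : R -> R) (T : Rbar) (r l rt rx lt lx x2 : R -> R -> R) :
  Rbar_lt 0 T -> C1_strip T r rt rx -> C1_strip T l lt lx ->
  (forall t x, in_time T t -> rt t x + k (r t x - l t x) * rx t x = 0) ->
  (forall t x, in_time T t -> lt t x - k (r t x - l t x) * lx t x = 0) ->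
  (forall x, r 0 x = r0_of w0 x) -> (forall x, l 0 x = l0_of w0 x) ->
  (forall t b, in_time T t ->
     is_derive_within (in_time T) (fun s => x2 s b) t (- k (r t (x2 t b) - l t (x2 t b)))) ->
  (forall b, x2 0 b = b) ->
  forall t b, in_time T t ->
    is_derive (fun b' => x2 t b') b
      (sqrt (k (r t (x2 t b) - l0_of w0 b) / k (2 * r0_of w0 b)) *
       (1 + Derive (l0_of w0) b * sqrt (k (2 * r0_of w0 b)) *
            RInt (fun tau : R => fk (r tau (x2 tau b) - l0_of w0 b)) 0 t)).
Proof.
  intros HT Hr Hl Hpde_r Hpde_l Hinit_r Hinit_l Hx2 Hx2_0 t b Ht.
  assert (Hflip : forall t x, -1 * (l t x - r t x) = r t x - l t x) by (intros; ring).
  assert (H := compression_ratio T (-1) l r lt lx rt rx x2 HT ltac:(ring) Hl Hr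
    ltac:(intros t' x Ht'; rewrite Hflip, <- (Hpde_l t' x Ht'); ring)
    ltac:(intros t' x Ht'; rewrite Hflip, <- (Hpde_r t' x Ht'); ring)
    ltac:(intros x; rewrite Hinit_r, Hinit_l; unfold r0_of, l0_of; ring)
    ltac:(intros t' b' Ht'; rewrite Hflip; replace (-1 * k (r t' (x2 t' b') - l t' (x2 t' b')))
            with (- k (r t' (x2 t' b') - l t' (x2 t' b'))) by ring; apply Hx2, Ht')
    Hx2_0 b t Ht).
  assert (Hd : Derive (l0_of w0) b = lx 0 b).
  { rewrite <- (Derive_ext (fun x => l 0 x) (l0_of w0) b Hinit_l).
    apply is_derive_unique, (Hl 0 b (conj (Rle_refl 0) HT)). }
  assert (H2 : 2 * -1 * l 0 b = 2 * r0_of w0 b)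
    by (rewrite Hinit_l; unfold l0_of, r0_of; ring).
  rewrite Hd, <- Hinit_l. rewrite H2 in H.
  eapply is_derive_congr; [exact H | reflexivity |].
  replace (-1 * (l 0 b - r t (x2 t b))) with (r t (x2 t b) - l 0 b) by ring.
  f_equal. f_equal. f_equal. apply RInt_ext. intros x _. f_equal. ring.
Qed.

Theorem mainTheorem4
  (w0 : R -> R)
  (Hw0 : C2 w0)
  (Hbdd : exists M, forall x, Rabs (Derive w0 x) <= M)
  (Hnc : exists x y, Derive w0 x <> Derive w0 y)
  (T : Rbar) (HT : Rbar_lt 0 T)
  (r l rt rx lt lx : R -> R -> R)
  (Hr : C1_strip T r rt rx) (Hl : C1_strip T l lt lx)
  (Hpde_r : forall t x, in_time T t -> rt t x + k (r t x - l t x) * rx t x = 0)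
  (Hpde_l : forall t x, in_time T t -> lt t x - k (r t x - l t x) * lx t x = 0)
  (Hinit_r : forall x, r 0 x = r0_of w0 x)
  (Hinit_l : forall x, l 0 x = l0_of w0 x)
  (x1 x2 : R -> R -> R)
  (Hx1 : forall t a, in_time T t ->
     is_derive_within (in_time T) (fun s => x1 s a) t
       (k (r t (x1 t a) - l t (x1 t a))))
  (Hx1_0 : forall a, x1 0 a = a)
  (Hx2 : forall t b, in_time T t ->
     is_derive_within (in_time T) (fun s => x2 s b) t
       (- k (r t (x2 t b) - l t (x2 t b))))
  (Hx2_0 : forall b, x2 0 b = b) :
  forall t a b : R, in_time T t ->
    is_derive (fun a' => x1 t a') a
      (sqrt (k (r0_of w0 a - l t (x1 t a)) / k (2 * r0_of w0 a)) *
       (1 + Derive (r0_of w0) a * sqrt (k (2 * r0_of w0 a)) *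
            RInt (fun tau : R => fk (r0_of w0 a - l tau (x1 tau a))) 0 t)) /\
    is_derive (fun b' => x2 t b') b
      (sqrt (k (r t (x2 t b) - l0_of w0 b) / k (2 * r0_of w0 b)) *
       (1 + Derive (l0_of w0) b * sqrt (k (2 * r0_of w0 b)) *
            RInt (fun tau : R => fk (r tau (x2 tau b) - l0_of w0 b)) 0 t)).
Proof.
  intros t a b Ht. split.
  - exact (forward_compression_ratio w0 T r l rt rx lt lx x1 HT Hr Hl Hpde_r Hpde_l
             Hinit_r Hinit_l Hx1 Hx1_0 t a Ht).
  - exact (backward_compression_ratio w0 T r l rt rx lt lx x2 HT Hr Hl Hpde_r Hpde_l
             Hinit_r Hinit_l Hx2 Hx2_0 t b Ht).
Qed.
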